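(* Fix a real parameter $k$. Let $G$ be a topology that is strongly consistent (with respect to $k$) and physically connected. Then $G$ is strongly connected, i.e., for any two nodes $u,v$ of $G$ there is a directed path from $u$ to $v$ consisting only of active links.
   Context: A topology is a finite directed graph $G=(V,E)$ whose links $e\in E$ carry a real weight $w(e)$ and a state $s(e)\in\{\mathrm{active},\mathrm{inactive},\mathrm{unclassified}\}$; a link is classified if it is active or inactive. A path is a finite sequence of links in which the target of each link is the source of the next. $G$ is physically connected if between any two nodes there is a directed path of links in arbitrary state. $G$ is structurally consistent if it has no loops and no parallel links (two distinct links with the same source and target). For a link $ab$ from $a$ to $b$, a triangle for $ab$ is a node $c\notin\{a,b\}$ with classified links $ac$ and $cb$ such that $w(ab)>\max(w(ac),w(cb))$ and $w(ab)\ge k\cdot\min(w(ac),w(cb))$. Inactive-link constraint: every inactive link has a triangle. Active-link constraint: no active link has a triangle. Unclassified-link constraint: no link is unclassified. $G$ is weakly consistent if it is structurally consistent and fulfills the active-link and inactive-link constraints; it is strongly consistent if it is weakly consistent and additionally fulfills the unclassified-link constraint. *)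

From HB Require Import structures.
From mathcomp Require Import all_boot all_order all_algebra.
From mathcomp Require Import reals.
Set Implicit Arguments. Unset Strict Implicit. Unset Printing Implicit Defensive.
Import Order.TTheory GRing.Theory Num.Theory.
Local Open Scope ring_scope.

Inductive link_state := active | inactive | unclassified.

Record topology (R : realType) := Topology {
  node : finType;
  link : finType;
  src : link -> node;
  tgt : link -> node;
  weight : link -> R;
  state : link -> link_state }.

Section Defs.
Variables (R : realType) (G : topology R).

Definition classified (e : link G) : Prop :=
  state e = active \/ state e = inactive.

Fixpoint is_path (u v : node G) (p : seq (link G)) : Prop :=
  match p with
  | [::] => u = v
  | e :: p' => src e = u /\ is_path (tgt e) v p'
  end.

Definition physically_connected : Prop :=
  forall u v : node G, exists p : seq (link G), is_path u v p.

Definition strongly_connected : Prop :=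
  forall u v : node G, exists p : seq (link G),
    is_path u v p /\ (forall e, e \in p -> state e = active).

Definition no_loops : Prop := forall e : link G, src e <> tgt e.

Definition no_parallel_links : Prop :=
  forall e e' : link G, src e = src e' -> tgt e = tgt e' -> e = e'.

Definition structurally_consistent : Prop := no_loops /\ no_parallel_links.

Definition triangle (k : R) (ab : link G) (c : node G) : Prop :=
  c <> src ab /\ c <> tgt ab /\
  exists ac cb : link G,
    src ac = src ab /\ tgt ac = c /\ src cb = c /\ tgt cb = tgt ab /\
    classified ac /\ classified cb /\
    weight ab > Num.max (weight ac) (weight cb) /\
    weight ab >= k * Num.min (weight ac) (weight cb).

Definition has_triangle (k : R) (e : link G) : Prop := exists c, triangle k e c.

Definition inactive_link_constraint (k : R) : Prop :=
  forall e : link G, state e = inactive -> has_triangle k e.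

Definition active_link_constraint (k : R) : Prop :=
  forall e : link G, state e = active -> ~ has_triangle k e.

Definition unclassified_link_constraint : Prop :=
  forall e : link G, state e <> unclassified.

Definition weakly_consistent (k : R) : Prop :=
  [/\ structurally_consistent, active_link_constraint k & inactive_link_constraint k].

Definition strongly_consistent (k : R) : Prop :=
  weakly_consistent k /\ unclassified_link_constraint.

End Defs.

(* Induct on the weight of a link.  An inactive link has a triangle whose two sides are strictly
   lighter, hence joined by active paths by induction, and these concatenate
   to an active path between the ends of the link; unclassified links do not
   exist.  Replacing every link of a physical path by such an active path
   gives strong connectivity. *)
From mathcomp Require Import all_boot all_order all_algebra.
From mathcomp Require Import reals.
Set Implicit Arguments. Unset Strict Implicit. Unset Printing Implicit Defensive.
Import Order.TTheory GRing.Theory Num.Theory.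
Local Open Scope ring_scope.

Lemma fin_measure_ind (T : finType) (disp : Order.disp_t) (U : porderType disp)
    (f : T -> U) (P : T -> Prop) :
  (forall x, (forall y, (f y < f x)%O -> P y) -> P x) -> forall x, P x.
Proof.
move=> IH x.
pose below z := [set y | (f y < f z)%O].
have card_below_lt y z : (f y < f z)%O -> (#|below y| < #|below z|)%N.
  move=> lt_yz; apply: proper_card; apply/properP; split.
    by apply/subsetP => w; rewrite !inE => /lt_trans; apply.
  by exists y; rewrite !inE ?ltxx.
elim: #|below x|.+1 {-2}x (ltnSn #|below x|) => // n IHn z lt_zn.
apply: IH => y lt_yz; apply: IHn.
exact: leq_trans (card_below_lt _ _ lt_yz) _.
Qed.

Section ActiveConnectivity.

Variables (R : realType) (G : topology R).

Definition actively_connected (u v : node G) : Prop :=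
  exists p, is_path u v p /\ {in p, forall e, state e = active}.

Lemma is_path_cat (u w v : node G) p q :
  is_path u w p -> is_path w v q -> is_path u v (p ++ q).
Proof.
elim: p u => [|e p IH] u /=; first by move=> ->.
by move=> [-> path_p] path_q; split => //; apply: IH.
Qed.

Lemma actively_connected_refl (u : node G) : actively_connected u u.
Proof. by exists [::]. Qed.

Lemma actively_connected_trans (u w v : node G) :
  actively_connected u w -> actively_connected w v -> actively_connected u v.
Proof.
move=> [p [path_p act_p]] [q [path_q act_q]].
exists (p ++ q); split; first exact: is_path_cat path_p path_q.
by move=> e; rewrite mem_cat => /orP[/act_p | /act_q].
Qed.

Lemma actively_connected_active_link (e : link G) :
  state e = active -> actively_connected (src e) (tgt e).
Proof. by move=> act_e; exists [:: e]; split=> [|x]; [|rewrite inE => /eqP->]. Qed.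

Lemma triangle_sides_lighter (k : R) (ab : link G) (c : node G) :
  triangle k ab c ->
  exists ac cb : link G,
    [/\ src ac = src ab, tgt ac = c & weight ac < weight ab] /\
    [/\ src cb = c, tgt cb = tgt ab & weight cb < weight ab].
Proof.
move=> [_ [_ [ac [cb [<- [<- [cb_src [<- [_ [_ [lt_max _]]]]]]]]]]].
by move: lt_max; rewrite gt_max => /andP[lt_ac lt_cb]; exists ac, cb.
Qed.

Lemma actively_connected_link (k : R) :
  inactive_link_constraint G k -> unclassified_link_constraint G ->
  forall e : link G, actively_connected (src e) (tgt e).
Proof.
move=> inactive_tri classified_all.
elim/(fin_measure_ind (f := @weight _ G)) => e IH.
case state_e: (state e).
- exact: actively_connected_active_link.
- have [c tri] := inactive_tri e state_e.
  have [ac [cb [[<- ac_tgt lt_ac] [cb_src <- lt_cb]]]] := triangle_sides_lighter tri.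
  apply: (@actively_connected_trans _ c).
    by rewrite -ac_tgt; apply: IH.
  by rewrite -cb_src; apply: IH.
- by have := classified_all e.
Qed.

Lemma actively_connected_path (u v : node G) (p : seq (link G)) :
  (forall e : link G, actively_connected (src e) (tgt e)) ->
  is_path u v p -> actively_connected u v.
Proof.
move=> link_conn; elim: p u => [|e p IH] u /=.
  by move=> ->; apply: actively_connected_refl.
move=> [<- path_p]; exact: actively_connected_trans (link_conn e) (IH _ path_p).
Qed.

End ActiveConnectivity.

Theorem theorem2 (R : realType) (k : R) (G : topology R) :
  strongly_consistent G k -> physically_connected G -> strongly_connected G.
Proof.
move=> [[_ _ inactive_tri] classified_all] phys u v.
have [p path_p] := phys u v.
exact: actively_connected_path (actively_connected_link inactive_tri classified_all) path_p.
Qed.
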